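(* Assume (A.3). Then there is a constant $C_{T,\lambda,\epsilon}>0$, independent of $h$, such that for all sufficiently small $h$, \[ \int_0^T\big\|f(\dot{\hat y}_h(t),\hat y_h(t),\hat u_h(t),t)\big\|_2^2\,dt\le C_{T,\lambda,\epsilon}h^{2\lambda\eta}. \]
   Context: Let $T>0$. $\mathcal{X}$: pairs $(y,u)$ with $y:[0,T]\to\mathbb{R}^{n_y}$, $y\in L^\infty$, $\dot y\in L^2$ (weak derivative), $u\in L^\infty([0,T];\mathbb{R}^{n_u})$; $\|(y,u)\|_{\mathcal{X}}=\|\dot y\|_{L^2}+\operatorname{ess\,sup}_t\|(y(t),u(t))\|_\infty$, where $\|\dot y\|_{L^2}=(\int_0^T\|\dot y\|_2^2dt)^{1/2}$. Given $M,b$ on $\mathbb{R}^{n_y}\times\mathbb{R}^{n_y}$, $f_1:\mathbb{R}^{n_y}\times\mathbb{R}^{n_u}\times[0,T]\to\mathbb{R}^{n_y}$, $f_2:\mathbb{R}^{n_y}\times\mathbb{R}^{n_u}\times[0,T]\to\mathbb{R}^{n_c}$ and bounds $y_L\le y_R$, $u_L\le u_R$, the optimal control problem minimizes $M(y(0),y(T))$ over $\mathcal{X}$ subject to $b(y(0),y(T))=0$, $\dot y=f_1(y,u,t)$ and $f_2(y,u,t)=0$ a.e., and the bounds for all $t$; $(y^\star,u^\star)$ is a local minimizer. $f(\dot y,y,u,t)=(f_1(y,u,t)-\dot y,\ f_2(y,u,t))$. Mesh $0=t_1<\dots<t_{N+1}=T$, $h=\max_i(t_{i+1}-t_i)$,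 degree $p$; $\mathcal{X}_{h,p}$: $y_h$ continuous and polynomial of degree $\le p$ on each mesh interval, $u_h$ polynomial of degree $\le p-1$ on each mesh interval; $\mathcal{B}_{h,p}\subset\mathcal{X}_{h,p}$ the pairs satisfying the bounds at the sampling points. (Approximability) there are $h_0,\eta,C_\eta>0$ such that for all $h\le h_0$ there is $(y_h,u_h)\in\mathcal{B}_{h,p}$ with $\|(y^\star,u^\star)-(y_h,u_h)\|_{\mathcal{X}}\le C_\eta h^\eta$; $(\hat y_h,\hat u_h)$ denotes a fixed such pair. (A.3): there are $\lambda\in(0,1]$, $C_\lambda>0$, $\epsilon>0$ such that $M$ and $b$ are $\lambda$-H\''older with constant $C_\lambda$ at $(y^\star(0),y^\star(T))$ within Euclidean distance $\epsilon$, and for each $t$, $\|(f_1(y^\star(t),u^\star(t),t)-f_1(v,w,t),f_2(y^\star(t),u^\star(t),t)-f_2(v,w,t))\|_2\le C_\lambda\|(y^\star(t)-v,u^\star(t)-w)\|_2^\lambda$ whenever $\|(y^\star(t)-v,u^\star(t)-w)\|_2\le\epsilon$. *)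

From HB Require Import structures.
From mathcomp Require Import all_boot all_order all_algebra.
From mathcomp Require Import all_classical all_reals all_analysis.
Set Implicit Arguments. Unset Strict Implicit. Unset Printing Implicit Defensive.
Import Order.TTheory GRing.Theory Num.Theory.
Import numFieldNormedType.Exports.
Local Open Scope classical_set_scope.
Local Open Scope ring_scope.

Section Defs.
Variable R : realType.

Definition leb := (@lebesgue_measure R).

Definition vnorm2 n (v : 'rV[R]_n) : R := Num.sqrt (\sum_(i < n) v ord0 i ^+ 2).
Definition vnorminf n (v : 'rV[R]_n) : R := \big[Num.max/0]_(i < n) `|v ord0 i|.

Definition vbounds n (lo v hi : 'rV[R]_n) : Prop :=
  forall j : 'I_n, lo ord0 j <= v ord0 j <= hi ord0 j.

Definition ess_sup_on (T : R) (g : R -> R) : \bar R :=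
  ereal_inf [set c | \forall t \ae leb, (0 <= t <= T) -> ((g t)%:E <= c)%E].

(* Membership in the space X: y is represented by its (absolutely) continuous
   representative with y(t) = y(0) + int_0^t dy, dy in L^2(0,T) (dy is the weak
   derivative of y), and u is measurable and essentially bounded on [0,T]. *)
Definition inX (T : R) ny nu (y dy : R -> 'rV[R]_ny) (u : R -> 'rV[R]_nu) : Prop :=
  (forall j : 'I_ny,
     measurable_fun `[0, T] (fun s => dy s ord0 j) /\
     leb.-integrable `[0, T] (fun s => ((dy s ord0 j) ^+ 2)%:E) /\
     forall t, 0 <= t <= T ->
       y t ord0 j = y 0 ord0 j + Rintegral leb `[0, t] (fun s => dy s ord0 j)) /\
  (forall j : 'I_nu, measurable_fun `[0, T] (fun s => u s ord0 j)) /\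
  (exists K : R, \forall t \ae leb, (0 <= t <= T) -> vnorminf (u t) <= K).

Definition Xdist (T : R) ny nu (y1 dy1 : R -> 'rV[R]_ny) (u1 : R -> 'rV[R]_nu)
    (y2 dy2 : R -> 'rV[R]_ny) (u2 : R -> 'rV[R]_nu) : \bar R :=
  ((\int[leb]_(s in `[0%R, T]%classic) ((vnorm2 (dy1 s - dy2 s)) ^+ 2)%:E) `^ (2^-1)%R
   + ess_sup_on T (fun t => vnorminf (row_mx (y1 t - y2 t) (u1 t - u2 t))))%E.

Definition feasible (T : R) ny nu nc nb
    (b : 'rV[R]_ny -> 'rV[R]_ny -> 'rV[R]_nb)
    (f1 : 'rV[R]_ny -> 'rV[R]_nu -> R -> 'rV[R]_ny)
    (f2 : 'rV[R]_ny -> 'rV[R]_nu -> R -> 'rV[R]_nc)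
    (yL yR : 'rV[R]_ny) (uL uR : 'rV[R]_nu)
    (y dy : R -> 'rV[R]_ny) (u : R -> 'rV[R]_nu) : Prop :=
  [/\ inX T y dy u,
      b (y 0) (y T) = 0,
      \forall t \ae leb, (0 <= t <= T) -> dy t = f1 (y t) (u t) t,
      \forall t \ae leb, (0 <= t <= T) -> f2 (y t) (u t) t = 0 &
      forall t, 0 <= t <= T -> vbounds yL (y t) yR /\ vbounds uL (u t) uR].

Definition local_minimizer (T : R) ny nu nc nb
    (M : 'rV[R]_ny -> 'rV[R]_ny -> R)
    (b : 'rV[R]_ny -> 'rV[R]_ny -> 'rV[R]_nb)
    (f1 : 'rV[R]_ny -> 'rV[R]_nu -> R -> 'rV[R]_ny)
    (f2 : 'rV[R]_ny -> 'rV[R]_nu -> R -> 'rV[R]_nc)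
    (yL yR : 'rV[R]_ny) (uL uR : 'rV[R]_nu)
    (ys dys : R -> 'rV[R]_ny) (us : R -> 'rV[R]_nu) : Prop :=
  feasible T b f1 f2 yL yR uL uR ys dys us /\
  exists delta : R, 0 < delta /\
    forall y dy u, feasible T b f1 f2 yL yR uL uR y dy u ->
      (Xdist T ys dys us y dy u < delta%:E)%E ->
      M (ys 0) (ys T) <= M (y 0) (y T).

Definition is_mesh (T : R) (N : nat) (t : nat -> R) : Prop :=
  [/\ (0 < N)%N, t 0%N = 0, t N = T & forall i, (i < N)%N -> t i < t i.+1].

Definition meshsize (N : nat) (t : nat -> R) : R :=
  \big[Num.max/0]_(i < N) (t i.+1 - t i).

Definition inB (T : R) ny nu (p : nat) (N : nat) (t : nat -> R) (S : set R)
    (yL yR : 'rV[R]_ny) (uL uR : 'rV[R]_nu)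
    (y dy : R -> 'rV[R]_ny) (u : R -> 'rV[R]_nu) : Prop :=
  [/\ inX T y dy u,
      {within `[0, T], continuous y},
      forall i, (i < N)%N -> forall j : 'I_ny, exists P : {poly R},
        (size P <= p.+1)%N /\ forall s, t i <= s <= t i.+1 -> y s ord0 j = P.[s],
      forall i, (i < N)%N -> forall j : 'I_nu, exists P : {poly R},
        (size P <= p)%N /\ forall s, t i <= s < t i.+1 -> u s ord0 j = P.[s] &
      forall s, S s -> vbounds yL (y s) yR /\ vbounds uL (u s) uR].

End Defs.

From HB Require Import structures.
From mathcomp Require Import all_boot all_order all_algebra.
From mathcomp Require Import all_classical all_reals all_analysis.
From mathcomp Require Import measurable_realfun lra.
Import Order.TTheory GRing.Theory Num.Theory.
Local Open Scope classical_set_scope.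
Local Open Scope ring_scope.
Set Implicit Arguments. Unset Strict Implicit. Unset Printing Implicit Defensive.

(* Since (ys, us) is feasible, the residual (f1(yh, uh) - dyh, f2(yh, uh)) equals
   (dys - dyh, 0) minus the increment of (f1, f2) between (ys, us) and (yh, uh).
   The X-distance bounds dys - dyh in L^2 by C_eta h^eta, and bounds
   (ys - yh, us - uh) almost everywhere by a multiple of h^eta; once that is
   below eps, (A.3) bounds the increment pointwise by a multiple of h^(lam eta).
   Squaring and integrating over [0, T] gives the claim, because
   h^eta <= h^(lam eta) for h <= 1. *)

Section integral_nonmeasurable.
Local Open Scope ereal_scope.
Context d (T : measurableType d) (R : realType) (mu : {measure set T -> \bar R}).

(* No measurability is needed: the integral of a nonnegative function is the
   supremum of the integrals of its simple minorants.  The residual below is not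
   known to be measurable, since f1 and f2 are arbitrary. *)
Lemma ge0_le_integral_nomeas (D : set T) (f g : T -> \bar R) :
  (forall x, D x -> 0 <= f x) -> (forall x, D x -> 0 <= g x) ->
  (forall x, D x -> f x <= g x) ->
  \int[mu]_(x in D) f x <= \int[mu]_(x in D) g x.
Proof.
move=> f0 g0 fg; rewrite !ge0_integralE//.
apply: ereal_sup_le => _ [h /= hf <-]; exists h => //= x.
apply: le_trans (hf x) _; rewrite /patch; case: ifP => // /[!inE] Dx.
exact: fg.
Qed.

Lemma ae_ge0_le_integral_meas_r (D : set T) (f g : T -> \bar R) :
  measurable D -> measurable_fun D g ->
  (forall x, D x -> 0 <= f x) -> (forall x, D x -> 0 <= g x) ->
  {ae mu, forall x, D x -> f x <= g x} ->
  \int[mu]_(x in D) f x <= \int[mu]_(x in D) g x.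
Proof.
move=> mD mg f0 g0 [N [mN N0 sN]].
pose g' x := if x \in N then +oo else g x.
have mg' : measurable_fun D g'.
  apply: measurable_fun_if => //.
  - apply: (measurable_fun_bool true).
    rewrite (_ : _ @^-1` _ = N); first exact: measurableI.
    by apply/seteqP; split => x /=; [move/set_mem|move/mem_set].
  - by apply: (measurable_funS mD) mg => // x [].
have -> : \int[mu]_(x in D) g x = \int[mu]_(x in D) g' x.
  apply: ae_eq_integral => //; exists N; split => // x /= /not_implyP[Dx].
  by rewrite /g'; case: ifPn => [/set_mem//|_ /(_ erefl)].
apply: ge0_le_integral_nomeas => // x Dx; rewrite /g'; case: ifPn => [_|xN].
- exact: leey.
- exact: g0.
- exact: leey.
apply: contrapT => fgx; apply: (negP xN); apply/mem_set; apply: sN => /=.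
by move/(_ Dx).
Qed.

End integral_nonmeasurable.

Section vnorm.
Context {R : realType}.
Implicit Types n k : nat.

Lemma vnorminf_ge0 n (v : 'rV[R]_n) : 0 <= vnorminf v.
Proof. exact: bigmax_ge_id. Qed.

Lemma vnorm2_ge0 n (v : 'rV[R]_n) : 0 <= vnorm2 v.
Proof. exact: sqrtr_ge0. Qed.

Lemma vnorm2_sqr n (v : 'rV[R]_n) : vnorm2 v ^+ 2 = \sum_(i < n) v ord0 i ^+ 2.
Proof. by rewrite sqr_sqrtr // sumr_ge0 // => i _; exact: sqr_ge0. Qed.

Lemma vnorm2_0 n : vnorm2 (0 : 'rV[R]_n) = 0.
Proof. by rewrite /vnorm2 big1 ?sqrtr0 // => i _; rewrite mxE expr0n. Qed.

Lemma vnorm2N n (v : 'rV[R]_n) : vnorm2 (- v) = vnorm2 v.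
Proof. by rewrite /vnorm2; congr Num.sqrt; apply: eq_bigr => i _; rewrite mxE sqrrN. Qed.

Lemma vnorm2_row_mx_sqr n k (x : 'rV[R]_n) (y : 'rV[R]_k) :
  vnorm2 (row_mx x y) ^+ 2 = vnorm2 x ^+ 2 + vnorm2 y ^+ 2.
Proof.
by rewrite !vnorm2_sqr big_split_ord /=; congr (_ + _); apply: eq_bigr => i _;
  rewrite ?row_mxEl ?row_mxEr.
Qed.

Lemma vnorm2D_sqr_le n (a b : 'rV[R]_n) :
  vnorm2 (a + b) ^+ 2 <= 2 * vnorm2 a ^+ 2 + 2 * vnorm2 b ^+ 2.
Proof.
rewrite !vnorm2_sqr !mulr_sumr -big_split /=; apply: ler_sum => i _.
rewrite mxE; have := sqr_ge0 (a ord0 i - b ord0 i); nra.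
Qed.

Lemma vnorm2_le_vnorminf n (v : 'rV[R]_n) : vnorm2 v <= n%:R * vnorminf v.
Proof.
have v0 := vnorminf_ge0 v.
rewrite -(ger0_norm (mulr_ge0 (ler0n _ n) v0)) -sqrtr_sqr ler_sqrt; last exact: sqr_ge0.
apply: (@le_trans _ _ (\sum_(i < n) vnorminf v ^+ 2)).
  apply: ler_sum => i _; rewrite -real_normK ?num_real //.
  by apply: lerXn2r; rewrite ?nnegrE //; exact: le_bigmax.
rewrite sumr_const card_ord exprMn -[_ *+ n]mulr_natl; apply: ler_wpM2r; first exact: sqr_ge0.
by rewrite -natrX ler_nat; case: (n) => // k; rewrite expnS leq_pmulr.
Qed.

Lemma measurable_vnorm2_sqr n (D : set R) (v : R -> 'rV[R]_n) :
  (forall j, measurable_fun D (fun s => v s ord0 j)) ->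
  measurable_fun D (fun s => vnorm2 (v s) ^+ 2).
Proof.
move=> mv; under eq_fun do rewrite vnorm2_sqr.
by apply: measurable_sum => j; exact: measurable_funX.
Qed.

Lemma vnorm2_residual_sqr_le n k (f f' dy dy' : 'rV[R]_n) (g g' : 'rV[R]_k) :
  dy = f -> g = 0 ->
  vnorm2 (row_mx (f' - dy') g') ^+ 2
    <= 2 * vnorm2 (row_mx (f - f') (g - g')) ^+ 2 + 2 * vnorm2 (dy - dy') ^+ 2.
Proof.
move=> <- ->.
have -> : row_mx (f' - dy') g' = - row_mx (dy - f') (0 - g') + row_mx (dy - dy') 0.
  by rewrite opp_row_mx add_row_mx sub0r opprK addr0 opprB addrA subrK.
apply: le_trans (vnorm2D_sqr_le _ _) _.
by rewrite vnorm2N !vnorm2_row_mx_sqr vnorm2_0 expr0n addr0.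
Qed.

End vnorm.

Section ess_sup_on.
Local Open Scope ereal_scope.
Context {R : realType}.
Implicit Types (T : R) (g : R -> R).

Lemma ess_sup_on_ge0 T g : (0 < T)%R -> (forall t, 0 <= g t)%R -> 0 <= ess_sup_on T g.
Proof.
move=> T0 g0; apply: le_ereal_inf_tmp => c [N [mN N0 sN]].
rewrite leNgt; apply/negP => c0.
have sub : `[0%R, T] `<=` N.
  move=> t tI; apply: sN => /= gc.
  have tT : (0 <= t <= T)%R by move: tI => /=; rewrite in_itv.
  by have := le_lt_trans (gc tT) c0; rewrite lte_fin ltNge g0.
have le_N := le_measure (@leb R) (mem_set (measurable_itv `[0%R, T])) (mem_set mN) sub.
have : leb `[0%R, T] <= 0.
  by apply: (le_trans le_N); move/eqP: N0; rewrite eq_le => /andP[].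
by rewrite /leb lebesgue_measure_itv /= lte_fin T0 sube0 lee_fin leNgt T0.
Qed.

Lemma ess_sup_on_le_ae T g (K K' : R) : ess_sup_on T g <= K%:E -> (K < K')%R ->
  \forall t \ae (@leb R), (0 <= t <= T)%R -> (g t <= K')%R.
Proof.
move=> gK KK'.
have KK'E : K%:E < K'%:E by rewrite lte_fin.
have [c [N [mN N0 sN]] cK'] := ereal_inf_lt (le_lt_trans gK KK'E).
exists N; split => // t /= nP; apply: sN => /= gc.
by apply: nP => tT; have := le_lt_trans (gc tT) cK'; rewrite lte_fin => /ltW.
Qed.

End ess_sup_on.

Section Xdist.
Context {R : realType} (T : R) (ny nu : nat).
Variables (y1 dy1 y2 dy2 : R -> 'rV[R]_ny) (u1 u2 : R -> 'rV[R]_nu) (X : R).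
Hypothesis y12_le : (Xdist T y1 dy1 u1 y2 dy2 u2 <= X%:E)%E.

Lemma Xdist_le_ae_sup X' : X < X' ->
  \forall t \ae (@leb R), 0 <= t <= T ->
    vnorminf (row_mx (y1 t - y2 t) (u1 t - u2 t)) <= X'.
Proof.
apply: ess_sup_on_le_ae; apply: le_trans y12_le.
by apply: leeDr; exact: poweR_ge0.
Qed.

Lemma Xdist_le_L2 : 0 < T ->
  (\int[@leb R]_(s in `[0%R, T]%classic) (vnorm2 (dy1 s - dy2 s) ^+ 2)%:E
    <= (X ^+ 2)%:E)%E.
Proof.
move=> T0.
set I := (X in (X <= _)%E).
set E := ess_sup_on T (fun t => vnorminf (row_mx (y1 t - y2 t) (u1 t - u2 t))).
have IE_le : (I `^ 2^-1 + E <= X%:E)%E := y12_le.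
have E0 : (0 <= E)%E by apply: ess_sup_on_ge0 => // s; exact: vnorminf_ge0.
have I0 : (0 <= I)%E by apply: integral_ge0 => s _; rewrite lee_fin sqr_ge0.
move: I0 (le_trans (leeDl _ E0) IE_le); clear IE_le; case: I => [r| |] //=.
  rewrite !lee_fin => r0; rewrite powR12_sqrt // => sqrt_le.
  by rewrite -(sqr_sqrtr r0) lerXn2r // nnegrE ?sqrtr_ge0 // (le_trans _ sqrt_le).
by rewrite invr_eq0 pnatr_eq0 /= => _; rewrite leNgt ltey.
Qed.

End Xdist.

Lemma integral_cstDZ_le {R : realType} (T c k B : R) (g : R -> R) :
  0 < T -> 0 <= c -> 0 <= k -> measurable_fun `[0, T] g -> (forall s, 0 <= g s) ->
  (\int[@leb R]_(s in `[0%R, T]%classic) (g s)%:E <= B%:E)%E ->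
  (\int[@leb R]_(s in `[0%R, T]%classic) (c + k * g s)%:E <= (c * T + k * B)%:E)%E.
Proof.
move=> T0 c0 k0 mg g0 gB.
under eq_integral => s _ do rewrite EFinD EFinM.
rewrite ge0_integralD //; last 2 first.
- by move=> s _; rewrite mule_ge0 // lee_fin.
- by apply: measurable_funeM; exact/measurable_EFinP.
rewrite integral_cst // ge0_integralZl_EFin //; last 2 first.
- by move=> s _; rewrite lee_fin.
- exact/measurable_EFinP.
have leb_0T : (@leb R `[0%R, T] = T%:E)%E.
  by rewrite /leb lebesgue_measure_itv /= lte_fin T0 sube0.
rewrite [X in (_ * X + _)%E](_ : _ = T%:E); last exact: leb_0T.
apply: le_trans (leeD (lexx _) (lee_wpmul2l _ gB)) _; first by rewrite lee_fin.
by rewrite EFinD !EFinM.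
Qed.

Definition dae_residual {R : realType} ny nu nc
    (f1 : 'rV[R]_ny -> 'rV[R]_nu -> R -> 'rV[R]_ny)
    (f2 : 'rV[R]_ny -> 'rV[R]_nu -> R -> 'rV[R]_nc)
    (y dy : R -> 'rV[R]_ny) (u : R -> 'rV[R]_nu) (t : R) : 'rV[R]_(ny + nc) :=
  row_mx (f1 (y t) (u t) t - dy t) (f2 (y t) (u t) t).

Section residual_estimate.
Context {R : realType} (T : R) (ny nu nc : nat).
Variables (f1 : 'rV[R]_ny -> 'rV[R]_nu -> R -> 'rV[R]_ny)
          (f2 : 'rV[R]_ny -> 'rV[R]_nu -> R -> 'rV[R]_nc).
Variables (ys dys : R -> 'rV[R]_ny) (us : R -> 'rV[R]_nu) (lam Clam eps : R).
Hypotheses (lam0 : 0 < lam) (Clam0 : 0 <= Clam).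
Hypothesis ys_state : \forall t \ae (@leb R), 0 <= t <= T -> dys t = f1 (ys t) (us t) t.
Hypothesis ys_alg : \forall t \ae (@leb R), 0 <= t <= T -> f2 (ys t) (us t) t = 0.
Hypothesis f_holder : forall t, 0 <= t <= T -> forall v w,
  vnorm2 (row_mx (ys t - v) (us t - w)) <= eps ->
  vnorm2 (row_mx (f1 (ys t) (us t) t - f1 v w t) (f2 (ys t) (us t) t - f2 v w t))
    <= Clam * vnorm2 (row_mx (ys t - v) (us t - w)) `^ lam.
Hypothesis mdys : forall j, measurable_fun `[0, T] (fun s => dys s ord0 j).

Let m : R := (ny + nu)%:R.

#[local] Instance leb_ae_filter : Filter (nbhs (almost_everywhere (@leb R))) :=
  ae_filter_ringOfSetsType _.

Lemma ae_residual_sqr_le (yh dyh : R -> 'rV[R]_ny) (uh : R -> 'rV[R]_nu) K :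
  0 <= K -> m * K <= eps ->
  (\forall t \ae (@leb R), 0 <= t <= T ->
     vnorminf (row_mx (ys t - yh t) (us t - uh t)) <= K) ->
  \forall s \ae (@leb R), `[0, T]%classic s ->
    vnorm2 (dae_residual f1 f2 yh dyh uh s) ^+ 2
      <= 2 * (Clam * (m * K) `^ lam) ^+ 2 + 2 * vnorm2 (dys s - dyh s) ^+ 2.
Proof.
move=> K0 mK_le sup_le.
apply: (filterS3 _ _ ys_state ys_alg sup_le) => s state alg sup sI.
have sT : 0 <= s <= T by move: sI; rewrite /= in_itv.
rewrite /dae_residual; apply: le_trans (vnorm2_residual_sqr_le _ _ _ (state sT) (alg sT)) _.
rewrite lerD2r ler_pM2l // lerXn2r ?nnegrE ?vnorm2_ge0 ?mulr_ge0 ?powR_ge0 //.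
have dist_le : vnorm2 (row_mx (ys s - yh s) (us s - uh s)) <= m * K.
  by apply: le_trans (vnorm2_le_vnorminf _) _; apply: ler_wpM2l (sup sT).
apply: le_trans (f_holder sT (le_trans dist_le mK_le)) _.
by rewrite ler_wpM2l // ge0_ler_powR ?nnegrE ?vnorm2_ge0 ?mulr_ge0 // ltW.
Qed.

Lemma integral_residual_sqr_le (yh dyh : R -> 'rV[R]_ny) (uh : R -> 'rV[R]_nu) X :
  0 < T -> 0 < X -> m * (2 * X) <= eps ->
  (forall j, measurable_fun `[0, T] (fun s => dyh s ord0 j)) ->
  (Xdist T ys dys us yh dyh uh <= X%:E)%E ->
  (\int[@leb R]_(s in `[0%R, T]%classic)
      (vnorm2 (dae_residual f1 f2 yh dyh uh s) ^+ 2)%:E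
    <= (2 * (Clam * (m * (2 * X)) `^ lam) ^+ 2 * T + 2 * X ^+ 2)%:E)%E.
Proof.
move=> T0 X0 mX_le mdyh yh_le.
set c := 2 * (Clam * (m * (2 * X)) `^ lam) ^+ 2.
have c0 : 0 <= c by rewrite mulr_ge0 // sqr_ge0.
have mdiff : measurable_fun `[0, T] (fun s => vnorm2 (dys s - dyh s) ^+ 2).
  apply: measurable_vnorm2_sqr => j.
  rewrite (_ : (fun s => _) = (fun s => dys s ord0 j - dyh s ord0 j)).
    exact: measurable_funB.
  by apply/funext => s; rewrite !mxE.
have sup_le : \forall t \ae (@leb R), 0 <= t <= T ->
    vnorminf (row_mx (ys t - yh t) (us t - uh t)) <= 2 * X.
  by apply: (Xdist_le_ae_sup yh_le); lra.
have X20 : 0 <= 2 * X by lra.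
have ae_le : \forall s \ae (@leb R), `[0, T]%classic s ->
    ((vnorm2 (dae_residual f1 f2 yh dyh uh s) ^+ 2)%:E
      <= (c + 2 * vnorm2 (dys s - dyh s) ^+ 2)%:E)%E.
  move: (ae_residual_sqr_le dyh X20 mX_le sup_le); apply: filterS => s le_s /le_s.
  by rewrite lee_fin.
apply: le_trans (ae_ge0_le_integral_meas_r _ _ _ _ ae_le) _.
- exact: measurable_itv.
- apply/measurable_EFinP; apply: measurable_funD; first exact: measurable_cst.
  by apply: measurable_funM => //; exact: measurable_cst.
- by move=> s _; rewrite lee_fin sqr_ge0.
- by move=> s _; rewrite lee_fin addr_ge0 // mulr_ge0 // sqr_ge0.
- exact: integral_cstDZ_le T0 c0 (ler0n _ 2) mdiff (fun s => sqr_ge0 _)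
    (Xdist_le_L2 yh_le T0).
Qed.

End residual_estimate.

Lemma meshsize_gt0 {R : realType} (T : R) N t : is_mesh T N t -> 0 < meshsize N t.
Proof.
case=> + _ _ t_lt; case: N t_lt => // N t_lt _.
by rewrite /meshsize big_ord_recl lt_max subr_gt0 t_lt.
Qed.

Lemma mul_powR_le_of_le {R : realType} (K eps eta h : R) :
  0 <= K -> 0 < eps -> 0 < eta -> 0 <= h ->
  h <= (eps / (K + 1)) `^ eta^-1 -> K * h `^ eta <= eps.
Proof.
move=> K0 eps0 eta0 h0 h_le.
have A0 : 0 <= eps / (K + 1) by rewrite divr_ge0 ?addr_ge0 // ltW.
have heta_le : h `^ eta <= eps / (K + 1).
  apply: le_trans (ge0_ler_powR (ltW eta0) _ _ h_le) _; rewrite ?nnegrE ?powR_ge0 //.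
  by rewrite -powRrM mulVf ?gt_eqF // powRr1.
apply: le_trans (ler_wpM2l K0 heta_le) _.
rewrite mulrC mulrAC ler_pdivrMr ?ltr_wpDl //.
by apply: ler_wpM2l; rewrite ?lerDl ?ltW.
Qed.

Lemma holder_rate_le {R : realType} (Clam Ceta K T h lam eta : R) :
  0 <= K -> 0 <= T -> 0 < h <= 1 -> 0 < lam <= 1 -> 0 <= eta ->
  2 * (Clam * (K * h `^ eta) `^ lam) ^+ 2 * T + 2 * (Ceta * h `^ eta) ^+ 2
    <= (2 * (Clam * K `^ lam) ^+ 2 * T + 2 * Ceta ^+ 2) * h `^ (2 * lam * eta).
Proof.
move=> K0 T0 /andP[h0 h1] /andP[lam0 lam1] eta0.
set q := h `^ (lam * eta).
have -> : (K * h `^ eta) `^ lam = K `^ lam * q by rewrite powRM ?powR_ge0 // -powRrM (mulrC eta).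
have -> : h `^ (2 * lam * eta) = q ^+ 2.
  by rewrite -mulrA mulrC powRrM -[2]/(2%:R) powR_mulrn ?powR_ge0.
have heta_le : h `^ eta <= q.
  by apply: ger_powR; rewrite ?h0 ?h1 // ler_piMl.
have heta_sqr : Ceta ^+ 2 * (h `^ eta) ^+ 2 <= Ceta ^+ 2 * q ^+ 2.
  by rewrite ler_wpM2l ?sqr_ge0 // lerXn2r ?nnegrE ?powR_ge0.
rewrite !exprMn.
lra.
Qed.

Theorem mainTheorem19 (R : realType) (T : R) (ny nu nc nb : nat)
    (M : 'rV[R]_ny -> 'rV[R]_ny -> R)
    (b : 'rV[R]_ny -> 'rV[R]_ny -> 'rV[R]_nb)
    (f1 : 'rV[R]_ny -> 'rV[R]_nu -> R -> 'rV[R]_ny)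
    (f2 : 'rV[R]_ny -> 'rV[R]_nu -> R -> 'rV[R]_nc)
    (yL yR : 'rV[R]_ny) (uL uR : 'rV[R]_nu)
    (p : nat) (samp : nat -> (nat -> R) -> set R)
    (ys dys : R -> 'rV[R]_ny) (us : R -> 'rV[R]_nu)
    (h0 eta Ceta : R) (lam Clam eps : R) :
  0 < T ->
  (forall j, yL ord0 j <= yR ord0 j) ->
  (forall j, uL ord0 j <= uR ord0 j) ->
  (0 < p)%N ->
  local_minimizer T M b f1 f2 yL yR uL uR ys dys us ->
  (* Approximability *)
  0 < h0 -> 0 < eta -> 0 < Ceta ->
  (forall N t, is_mesh T N t -> meshsize N t <= h0 ->
     exists yh dyh uh, inB T p N t (samp N t) yL yR uL uR yh dyh uh /\
       (Xdist T ys dys us yh dyh uh <= (Ceta * meshsize N t `^ eta)%:E)%E) ->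
  (* (A.3) *)
  0 < lam -> lam <= 1 -> 0 < Clam -> 0 < eps ->
  (forall a c : 'rV[R]_ny,
     vnorm2 (row_mx (a - ys 0) (c - ys T)) <= eps ->
     `|M a c - M (ys 0) (ys T)| <= Clam * vnorm2 (row_mx (a - ys 0) (c - ys T)) `^ lam /\
     vnorm2 (b a c - b (ys 0) (ys T))
       <= Clam * vnorm2 (row_mx (a - ys 0) (c - ys T)) `^ lam) ->
  (forall t, 0 <= t <= T -> forall (v : 'rV[R]_ny) (w : 'rV[R]_nu),
     vnorm2 (row_mx (ys t - v) (us t - w)) <= eps ->
     vnorm2 (row_mx (f1 (ys t) (us t) t - f1 v w t) (f2 (ys t) (us t) t - f2 v w t))
       <= Clam * vnorm2 (row_mx (ys t - v) (us t - w)) `^ lam) ->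
  (* Conclusion *)
  exists C : R, 0 < C /\ exists h1 : R, 0 < h1 /\
    forall N t (yh dyh : R -> 'rV[R]_ny) (uh : R -> 'rV[R]_nu),
      is_mesh T N t -> meshsize N t <= h0 -> meshsize N t <= h1 ->
      inB T p N t (samp N t) yL yR uL uR yh dyh uh ->
      (Xdist T ys dys us yh dyh uh <= (Ceta * meshsize N t `^ eta)%:E)%E ->
      (\int[@leb R]_(s in `[0%R, T]%classic)
          ((vnorm2 (row_mx (f1 (yh s) (uh s) s - dyh s) (f2 (yh s) (uh s) s))) ^+ 2)%:E
       <= (C * meshsize N t `^ (2 * lam * eta))%:E)%E.
Proof.
move=> T0 _ _ _ [[[ys_X _] _ ys_state ys_alg _] _] _ eta0 Ceta0 _
  lam0 lam1 Clam0 eps0 _ f_holder.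
set K := (ny + nu)%:R * (2 * Ceta).
have K0 : 0 <= K by rewrite mulr_ge0 // mulr_ge0 // ltW.
exists (2 * (Clam * K `^ lam) ^+ 2 * T + 2 * Ceta ^+ 2).
split.
  have := sqr_ge0 (Clam * K `^ lam); have : 0 < Ceta ^+ 2 by exact: exprn_gt0.
  nra.
exists (Num.min 1 ((eps / (K + 1)) `^ eta^-1)).
split; first by rewrite lt_min ltr01 powR_gt0 // divr_gt0 // ltr_wpDl.
move=> N t yh dyh uh mesh _ h_le [[yh_X _] _ _ _ _] dist_le.
set h := meshsize N t in h_le dist_le *.
have h_gt0 : 0 < h := meshsize_gt0 mesh.
move: h_le; rewrite le_min => /andP[h_le1 h_leA].
have KX : (ny + nu)%:R * (2 * (Ceta * h `^ eta)) = K * h `^ eta by rewrite /K !mulrA.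
have KX_le : (ny + nu)%:R * (2 * (Ceta * h `^ eta)) <= eps.
  by rewrite KX; exact: mul_powR_le_of_le K0 eps0 eta0 (ltW h_gt0) h_leA.
apply: le_trans (integral_residual_sqr_le lam0 (ltW Clam0) ys_state ys_alg f_holder
  (fun j => (ys_X j).1) T0 (mulr_gt0 Ceta0 (powR_gt0 _ h_gt0)) KX_le
  (fun j => (yh_X j).1) dist_le) _.
rewrite lee_fin KX.
by apply: holder_rate_le; rewrite ?h_gt0 ?h_le1 ?lam0 ?lam1 ?K0 // ltW.
Qed.
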